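(* The Filtered Greedy Strategy (\texttt{FGS}) is a 3-approximation algorithm for \textbf{LTSP}: for every instance, the set $\mathcal B_1^{\mathrm{FGS}}$ it returns satisfies $v(\mathcal B_1^{\mathrm{FGS}})\le 3\,\mathrm{OPT}$, where $\mathrm{OPT}$ is the minimum total response time of the instance.
   Context: A single-track tape stores a sequence of files $\mathcal F=(f_1,\dots,f_n)$ laid out contiguously from left to right: file $f$ occupies blocks $l(f),\dots,r(f)$, has size $s(f)=r(f)-l(f)+1$, $l(f_1)=1$, $l(f_{i+1})=r(f_i)+1$, and $m=\sum_f s(f)$. The tape moves one block per time step; at time $0$ the head is at position $m$. A file is read when the head traverses it rightwards from $l(f)$ to $r(f)$. $\mathcal R$ is a finite set of requests, all released at time $0$, each associated with a file $f(r)$; $n(f)$ is the number of requests for $f$. A request's response time is the time at which the head starts a rightward reading traversal of its file (all pending requests of a file are serviced simultaneously). \textbf{LTSP} asks for a head movement minimizing the sum of response times. For files, $f'<f$ means $l(f')<l(f)$. A mini-batch is a pair $b=(f,f')$ of files with $l(f)\le l(f')$; $l(b)=l(f)$, $r(b)=r(f')$, $s(b)=r(b)-l(b)+1$, $\mathcal F(b)$ is the set of files $g$ with $l(b)\le l(g)$, $r(g)\le r(b)$; for a set $\mathcal B_1$, $\mathcal F(\mathcal B_1)=\bigcup_{b\in\mathcal B_1}\mathcal F(b)$, and $b<f$ means $l(b)<l(f)$. Given $\mathcal B_1$, its schedule is: Phase 1, the head moves leftwards from $m$ to $1$, and upon reaching $l(b)$ for $b\in\mathcal B_1$ executes $b$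 (moves rightwards to $r(b)$, reading all files of $\mathcal F(b)$, and returns to $l(b)$), then continues leftwards; Phase 2, the head moves rightwards from $1$ to $m$ reading every file; $v(\mathcal B_1)$ is its total response time. The Greedy Strategy (\texttt{GS}) returns $\{(f,f): f\in\mathcal F\setminus\{f_1\},\ n(f)>0\}$. \texttt{FGS} starts with $\mathcal B_1$ equal to the output of \texttt{GS} and then, for $|\mathcal F|$ rounds, for each file $f\in\mathcal F(\mathcal B_1)$ (with the current $\mathcal B_1$) removes $(f,f)$ from $\mathcal B_1$ whenever $n(f)\bigl(l(f)+\sum_{b\in\mathcal B_1,\ b<f}s(b)\bigr) < s(f)\bigl(\sum_{f'\in\mathcal F,\ f'<f}n(f')+\sum_{f'\in\mathcal F\setminus\mathcal F(\mathcal B_1),\ f'>f}n(f')\bigr)$; it returns the final $\mathcal B_1$. *)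

From mathcomp Require Import all_boot.
Set Implicit Arguments. Unset Strict Implicit. Unset Printing Implicit Defensive.

(* Instance.  Files f_1..f_n are indexed 0..n-1 (index i = file f_(i+1)).     *)
(*   s    : seq nat   sizes s(f) (all positive), n = size s                  *)
(*   req  : seq nat   the request set R, each request given by the index of  *)
(*                    its file f(r); n(f) = count_mem f req.                  *)
(* Tape positions are block boundaries 0..m: block p is the unit segment     *)
(* [p-1, p]; hence file f occupies [l(f)-1, r(f)], the head starts at the    *)
(* right end m, and reading f = a rightward traversal from l(f)-1 to r(f)    *)
(* (s(f) unit moves).                                                         *)

Section LTSP.
Variables (s : seq nat) (req : seq nat).

Definition nfiles := size s.
Definition sz (f : nat) : nat := nth 0 s f.
Definition mtot : nat := sumn s.
Definition lpos (f : nat) : nat := (sumn (take f s)).+1.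
Definition rpos (f : nat) : nat := lpos f + sz f - 1.
Definition ledge (f : nat) : nat := sumn (take f s).
Definition nreq (f : nat) : nat := count_mem f req.

(* A head movement is the sequence of head positions at times 0,1,...,K.     *)
Definition step_ok (a b : nat) : bool := (a == b.+1) || (b == a.+1).

Definition movement (tr : seq nat) : bool :=
  [&& head 0 tr == mtot, size tr > 0, all (fun p => p <= mtot) tr
    & all (fun t => step_ok (nth 0 tr t) (nth 0 tr t.+1)) (iota 0 (size tr).-1)].

Definition reads (tr : seq nat) (f t : nat) : bool :=
  (t + sz f < size tr) &&
  all (fun k => nth 0 tr (t + k) == ledge f + k) (iota 0 (sz f).+1).

(* response time of (all pending requests of) file f: first reading start *)
Definition resp (tr : seq nat) (f : nat) : nat := find (reads tr f) (iota 0 (size tr)).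

Definition serves_all (tr : seq nat) : bool :=
  all (fun f => has (reads tr f) (iota 0 (size tr))) req.

Definition feasible (tr : seq nat) : bool := movement tr && serves_all tr.

Definition total_resp (tr : seq nat) : nat := sumn [seq resp tr f | f <- req].

(* a mini-batch b = (f, f') (file indices, f <= f') *)
Definition bl (b : nat * nat) : nat := lpos b.1.
Definition br (b : nat * nat) : nat := rpos b.2.
Definition bsz (b : nat * nat) : nat := br b - bl b + 1.
Definition bledge (b : nat * nat) : nat := ledge b.1.

Definition inFB (B1 : seq (nat * nat)) (g : nat) : bool :=
  has (fun b => (bl b <= lpos g) && (rpos g <= br b)) B1.

(* executing b from its left boundary p: move right to r(b), come back to p *)
Definition detour (p q : nat) : seq nat := iota p.+1 (q - p) ++ rev (iota p (q - p)).

Definition detours_at (B1 : seq (nat * nat)) (p : nat) : seq nat :=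
  flatten [seq detour p (br b) | b <- undup B1 & bledge b == p].

(* Phase 1 positions after being at p (p excluded) *)
Fixpoint phase1 (B1 : seq (nat * nat)) (p : nat) : seq nat :=
  detours_at B1 p ++ (match p with 0 => [::] | p'.+1 => p' :: phase1 B1 p' end).

Definition schedule (B1 : seq (nat * nat)) : seq nat :=
  mtot :: phase1 B1 mtot ++ iota 1 mtot.

Definition v (B1 : seq (nat * nat)) : nat := total_resp (schedule B1).

Definition GS : seq (nat * nat) :=
  [seq (f, f) | f <- iota 1 (nfiles - 1) & 0 < nreq f].

Definition fgs_cond (B1 : seq (nat * nat)) (f : nat) : bool :=
  nreq f * (lpos f + sumn [seq bsz b | b <- undup B1 & bl b < lpos f])
  < sz f * (sumn [seq nreq f' | f' <- iota 0 nfiles & f' < f]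
            + sumn [seq nreq f' | f' <- iota 0 nfiles & (~~ inFB B1 f') && (f < f')]).

Definition fgs_step (B1 : seq (nat * nat)) (f : nat) : seq (nat * nat) :=
  if inFB B1 f && fgs_cond B1 f then filter (predC1 (f, f)) B1 else B1.

Definition fgs_round (B1 : seq (nat * nat)) : seq (nat * nat) :=
  foldl fgs_step B1 (iota 0 nfiles).

Definition FGS : seq (nat * nat) := iter nfiles fgs_round GS.

End LTSP.

From mathcomp Require Import all_boot zify.
Set Implicit Arguments. Unset Strict Implicit. Unset Printing Implicit Defensive.

(* Write e(f) = l(f) - 1 (ledge) for the left boundary of file f. Every head
   movement starts reading f no earlier than time m - e(f), so OPT is at least
   L = sum_f n(f) (m - e(f)).
   FGS only deletes batches from the output of GS, so it returns the singleton
   batches (f, f) of the files f in some set P. In that schedule a file of P is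
   read in Phase 1 by time m - e(f) + 2 (size of the P-files right of f), any
   other file in Phase 2 by time m + 2 (size of all P-files) + e(f). Summing,
   v <= 3 L + 2 (C(P) - K(P)), where C(P) (unbatched_cost) charges each request
   of a file f outside P with e(f) plus the size of the P-files left of f, and
   K(P) (batch_budget) charges each request of f with s(f) plus the size of the
   files right of f outside P. C = 0 for GS, and deleting (f, f) changes C - K by
     n(f) (e(f) + size of the P-files left of f)
     - s(f) (requests left of f + requests right of f outside P),
   which the FGS test makes negative. So C <= K throughout, and v <= 3 L. *)

Lemma sum_nat_pred1 a c x (F : nat -> nat) :
  \sum_(a <= i < c) (if i == x then F i else 0) = if a <= x < c then F x else 0.
Proof.
case: ifP => xin.
  rewrite (bigD1_seq x) ?mem_index_iota ?iota_uniq //= eqxx big1 ?addn0 //.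
  by move=> i /negbTE ->.
rewrite big_nat_cond big1 // => i /andP[ir _]; case: eqP => // e.
by rewrite -e ir in xin.
Qed.

Lemma sum_nat_pick n x (F : nat -> nat) : x < n ->
  \sum_(0 <= i < n) (if i == x then F i else 0) = F x.
Proof. by move=> xn; rewrite sum_nat_pred1 /= xn. Qed.

Lemma leq_sum_nat_subpred n (A B : pred nat) (F : nat -> nat) :
  (forall h, h < n -> A h -> B h) ->
  \sum_(0 <= h < n | A h) F h <= \sum_(0 <= h < n | B h) F h.
Proof.
by move=> AB; apply: (le_big_nat_cond leqnn (fun x y => leq_addr y x)).
Qed.

Lemma sum_seq_count_mem n (r : seq nat) (F : nat -> nat) : all (fun x => x < n) r ->
  \sum_(x <- r) F x = \sum_(0 <= i < n) count_mem i r * F i.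
Proof.
elim: r => [_|x r IH /andP[xn /IH {}IH]]; first by rewrite big_nil big1.
rewrite big_cons IH -(sum_nat_pick F xn) -big_split /=.
apply: eq_bigr => i _; rewrite mulnDl [x == i]eq_sym.
by case: (i == x); rewrite ?mul1n ?mul0n.
Qed.

Lemma drop_cons_cat_last (T : Type) (x : T) l r :
  drop (size l) (x :: l ++ r) = last x l :: r.
Proof. by elim: l x => [|y l IH] x //=. Qed.

Section TapeLayout.
Variable s : seq nat.
Hypothesis s_gt0 : all (fun x => 0 < x) s.
Local Notation n := (size s).

Lemma sz_gt0 h : h < n -> 0 < sz s h.
Proof. by move=> hn; apply: (allP s_gt0); rewrite mem_nth. Qed.

Lemma ledgeE g : g <= n -> ledge s g = \sum_(0 <= h < g) sz s h.
Proof.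
elim: g => [|g IH] gn; first by rewrite /ledge take0 big_geq.
rewrite /ledge (take_nth 0) // -cats1 sumn_cat /= addn0 big_nat_recr //=.
by rewrite -(IH (ltnW gn)).
Qed.

Lemma mtot_ledge : mtot s = ledge s n.
Proof. by rewrite /ledge take_size. Qed.

Lemma mtot_split g : g < n ->
  mtot s = ledge s g + sz s g + \sum_(0 <= h < n | g < h) sz s h.
Proof.
move=> gn; rewrite mtot_ledge !ledgeE ?(ltnW gn) // -big_nat_recr //=.
by rewrite (big_cat_nat (leq0n g.+1) gn) /= (@big_nat_widenl _ _ _ g.+1 0).
Qed.

Lemma ledge_sz_leq g h : g < h -> h <= n -> ledge s g + sz s g <= ledge s h.
Proof.
move=> gh hn; rewrite !ledgeE ?(leq_trans (ltnW gh)) // -big_nat_recr //=.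
by rewrite (big_cat_nat (leq0n g.+1) gh) leq_addr.
Qed.

Lemma ltn_ledge g h : g < n -> h < n -> (ledge s g < ledge s h) = (g < h).
Proof.
move=> gn hn; case: (ltngtP g h) => [gh|hg|->]; last by rewrite ltnn.
  by have := ledge_sz_leq gh (ltnW hn); have := sz_gt0 gn; lia.
by have := ledge_sz_leq hg (ltnW gn); lia.
Qed.

Lemma ledge_inj g h : g < n -> h < n -> ledge s g = ledge s h -> g = h.
Proof.
move=> gn hn e; case: (ltngtP g h) => // [gh|hg].
  by move: (ltn_ledge gn hn); rewrite e ltnn gh.
by move: (ltn_ledge hn gn); rewrite e ltnn hg.
Qed.

End TapeLayout.

Section Potential.
Variables (s req : seq nat).
Local Notation n := (size s).
Implicit Types (P : pred nat) (f g : nat).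

Definition batched_left P g := \sum_(0 <= h < n | P h && (h < g)) sz s h.
Definition unbatched_right P g := \sum_(0 <= h < n | ~~ P h && (g < h)) sz s h.
Definition nreq_left f := \sum_(0 <= g < n | g < f) nreq req g.
Definition nreq_unbatched_right P f := \sum_(0 <= g < n | ~~ P g && (f < g)) nreq req g.

Definition unbatched_cost P :=
  \sum_(0 <= g < n) nreq req g * (if P g then 0 else ledge s g + batched_left P g).
Definition batch_budget P :=
  \sum_(0 <= g < n) nreq req g * (sz s g + unbatched_right P g).

Variables (P : pred nat) (f : nat).
Hypotheses (fn : f < n) (Pf : P f).
Local Notation P' := (predD1 P f).

Lemma unbatched_right_predD1 g :
  unbatched_right P' g = unbatched_right P g + (if g < f then sz s f else 0).
Proof.
rewrite -(sum_nat_pick (fun h => if g < h then sz s h else 0) fn) /unbatched_right.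
rewrite big_mkcond [in RHS]big_mkcond -big_split /=; apply: eq_bigr => h _.
by case: (eqVneq h f) => [->|]; rewrite ?Pf //= addn0.
Qed.

Lemma batched_left_predD1 g :
  batched_left P g = batched_left P' g + (if f < g then sz s f else 0).
Proof.
rewrite -(sum_nat_pick (fun h => if h < g then sz s h else 0) fn) /batched_left.
rewrite big_mkcond [in RHS]big_mkcond -big_split /=; apply: eq_bigr => h _.
by case: (eqVneq h f) => [->|]; rewrite ?Pf //= addn0.
Qed.

Lemma batch_budget_predD1 : batch_budget P' = batch_budget P + sz s f * nreq_left f.
Proof.
rewrite /batch_budget /nreq_left big_distrr [X in _ = _ + X]big_mkcond -big_split /=.
by apply: eq_bigr => g _; rewrite unbatched_right_predD1; case: ifP => _; lia.
Qed.

Lemma unbatched_cost_predD1 :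
  unbatched_cost P' + sz s f * nreq_unbatched_right P f =
  unbatched_cost P + nreq req f * (ledge s f + batched_left P f).
Proof.
rewrite -(sum_nat_pick (fun=> nreq req f * (ledge s f + batched_left P f)) fn).
rewrite /unbatched_cost /nreq_unbatched_right big_distrr [X in _ + X = _]big_mkcond.
rewrite -!big_split /=.
apply: eq_bigr => g _; case: (eqVneq g f) => [->|gf] /=; rewrite ?Pf ?ltnn /=.
  by rewrite batched_left_predD1 ltnn !addn0 muln0.
case: (P g) => /=; first by rewrite !addn0.
rewrite batched_left_predD1; case: ifP => _; rewrite !addn0 //.
by rewrite !mulnDr addnA [sz s f * _]mulnC.
Qed.

Lemma removal_preserves_budget :
  nreq req f * (ledge s f + batched_left P f)
    <= sz s f * (nreq_left f + nreq_unbatched_right P f) ->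
  unbatched_cost P <= batch_budget P -> unbatched_cost P' <= batch_budget P'.
Proof. by have := unbatched_cost_predD1; rewrite batch_budget_predD1; lia. Qed.

End Potential.

Section FGSInvariant.
Variables (s req : seq nat).
Hypothesis s_gt0 : all (fun x => 0 < x) s.
Local Notation n := (size s).
Implicit Types (P : pred nat) (B : seq (nat * nat)).

Definition singletons P : seq (nat * nat) := [seq (f, f) | f <- iota 0 n & P f].

Lemma singletons_uniq P : uniq (singletons P).
Proof. by rewrite map_inj_uniq ?filter_uniq ?iota_uniq // => x y []. Qed.

Lemma filter_singletons P f :
  filter (predC1 (f, f)) (singletons P) = singletons (predD1 P f).
Proof.
rewrite filter_map -filter_predI; congr map; apply: eq_filter => g /=.
by rewrite xpair_eqE andbb.
Qed.

Let iota0E : iota 0 n = index_iota 0 n.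
Proof. by rewrite /index_iota subn0. Qed.

Lemma batched_left_leq_fgs P f : f < n ->
  batched_left s P f <= sumn [seq bsz s b | b <- singletons P & bl s b < lpos s f].
Proof.
move=> fn; rewrite sumnE big_map big_filter big_map big_filter_cond iota0E.
apply: (@leq_trans (\sum_(0 <= h < n | P h && (lpos s h < lpos s f)) sz s h)).
  apply: leq_sum_nat_subpred => h hn /andP[-> hf].
  by rewrite /lpos ltnS -/(ledge s h) -/(ledge s f) ltn_ledge.
by apply: leq_sum => h _; rewrite /bsz /br /bl /rpos /=; lia.
Qed.

Lemma nreq_left_fgs f :
  sumn [seq nreq req f' | f' <- iota 0 n & f' < f] = nreq_left s req f.
Proof. by rewrite sumnE big_map big_filter iota0E. Qed.

Lemma nreq_unbatched_right_fgs P f :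
  sumn [seq nreq req f' | f' <- iota 0 n & ~~ inFB s (singletons P) f' && (f < f')]
  <= nreq_unbatched_right s req P f.
Proof.
rewrite sumnE big_map big_filter iota0E.
apply: leq_sum_nat_subpred => g gn /andP[notFB ->].
rewrite andbT; apply: contra notFB => Pg; apply/hasP; exists (g, g).
  by rewrite map_f // mem_filter Pg mem_iota.
by rewrite /bl /br /= !leqnn.
Qed.

Lemma fgs_cond_singletons P f : f < n -> fgs_cond s req (singletons P) f ->
  nreq req f * (ledge s f + batched_left s P f)
  <= sz s f * (nreq_left s req f + nreq_unbatched_right s req P f).
Proof.
rewrite /fgs_cond (undup_id (singletons_uniq P)) /nfiles nreq_left_fgs.
move=> fn cond; have left_le := batched_left_leq_fgs P fn.
have right_le := nreq_unbatched_right_fgs P f.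
rewrite /lpos -/(ledge s f) in cond left_le.
have := leq_mul (leqnn (nreq req f)) (leq_add (leqnSn (ledge s f)) left_le).
have := leq_mul (leqnn (sz s f)) (leq_add (leqnn (nreq_left s req f)) right_le).
lia.
Qed.

Definition fgs_invariant B :=
  exists2 P, B = singletons P & unbatched_cost s req P <= batch_budget s req P.

Lemma fgs_step_invariant B f : fgs_invariant B -> fgs_invariant (fgs_step s req B f).
Proof.
case=> P -> cost_le; rewrite /fgs_step; case: ifP => [/andP[_ cond]|_]; last by exists P.
rewrite filter_singletons; have [/andP[fn Pf]|nPf] := boolP ((f < n) && P f).
  exists (predD1 P f) => //; apply: removal_preserves_budget => //.
  exact: fgs_cond_singletons.
exists P => //; congr map; apply: eq_in_filter => g.
rewrite mem_iota add0n => /andP[_ gn] /=.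
by case: eqVneq gn => [-> fn|] //=; apply/esym/negbTE; rewrite fn in nPf.
Qed.

Definition gs_batched f := (0 < f) && (0 < nreq req f).

Lemma GS_singletons : GS s req = singletons gs_batched.
Proof.
rewrite /GS /singletons /nfiles; congr map; case: n => [|m] //=.
rewrite subn1 /=; apply: eq_in_filter => g.
by rewrite mem_iota /gs_batched => /andP[-> _].
Qed.

Lemma unbatched_cost_GS : unbatched_cost s req gs_batched = 0.
Proof.
rewrite /unbatched_cost big1 // => -[|g] _; rewrite /gs_batched /=.
  by rewrite /ledge take0 /batched_left big1 ?muln0 // => h /andP[_]; rewrite ltn0.
by case: (nreq req g.+1) => [|k]; rewrite ?mul0n ?muln0.
Qed.

Lemma FGS_invariant : fgs_invariant (FGS s req).
Proof.
rewrite /FGS; elim: (nfiles s) => [|k IH] /=.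
  by exists gs_batched; rewrite ?GS_singletons ?unbatched_cost_GS.
rewrite /fgs_round; elim: (iota 0 _) (iter k _ _) IH => [|f fs IHfs] B invB //=.
exact/IHfs/fgs_step_invariant.
Qed.

End FGSInvariant.

Lemma movement_pos_lb s tr t : movement s tr -> t < size tr -> mtot s - t <= nth 0 tr t.
Proof.
case/and4P => /eqP tr0 _ _ /allP tr_steps; elim: t => [|t IH] t_lt.
  by rewrite nth0 tr0 subn0.
have /tr_steps : t \in iota 0 (size tr).-1 by rewrite mem_iota; lia.
by rewrite /step_ok => /orP[] /eqP; have := IH (ltnW t_lt); lia.
Qed.

Lemma resp_lb s req tr f :
  feasible s req tr -> f \in req -> mtot s - ledge s f <= resp s tr f.
Proof.
case/andP => mv /allP /[apply] reads_f.
have resp_lt : resp s tr f < size tr by move: reads_f; rewrite has_find size_iota.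
move: (nth_find 0 reads_f); rewrite -/(resp s tr f) nth_iota // add0n.
case/andP => _ /allP /(_ 0); rewrite mem_iota /= !addn0 => /(_ isT) /eqP <-.
by have := movement_pos_lb mv resp_lt; lia.
Qed.

Lemma reads_window s tr f t :
  take (sz s f).+1 (drop t tr) = iota (ledge s f) (sz s f).+1 -> reads s tr f t.
Proof.
move=> win; apply/andP; split.
  by have := congr1 size win; rewrite size_take size_drop size_iota; case: ltnP; lia.
apply/allP => k; rewrite mem_iota add0n => /andP[_ k_lt].
by rewrite -(nth_iota 0 (ledge s f) k_lt) -win nth_take // nth_drop.
Qed.

Lemma resp_leq s tr f t : reads s tr f t -> resp s tr f <= t.
Proof.
move=> rd; have t_lt : t < size tr by case/andP: rd; lia.
rewrite /resp; case: leqP => // lt; have := before_find 0 lt.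
by rewrite nth_iota // add0n rd.
Qed.

Section PhaseOne.
Variables (s : seq nat) (B : seq (nat * nat)).
Local Notation D p := (detours_at s B p).

Definition phase1_time p q := (p - q) + \sum_(q.+1 <= i < p.+1) size (D i).

Lemma phase1E p : phase1 s B p = D p ++ (if p is p'.+1 then p' :: phase1 s B p' else [::]).
Proof. by case: p. Qed.

Lemma drop_phase1 p q r : q <= p ->
  drop (phase1_time p q) (p :: phase1 s B p ++ r) = q :: phase1 s B q ++ r.
Proof.
elim: p => [|p IH]; first by rewrite leqn0 => /eqP ->; rewrite /phase1_time big_geq.
rewrite leq_eqVlt => /orP[/eqP ->|]; first by rewrite /phase1_time subnn big_geq.
rewrite ltnS => qp; rewrite /phase1_time big_nat_recr //= -/(phase1_time p q).
have -> : p.+1 - q + (\sum_(q.+1 <= i < p.+1) size (D i) + size (D p.+1))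
          = (size (D p.+1) + phase1_time p q).+1 by rewrite /phase1_time; lia.
by rewrite /= -catA addnC -drop_drop drop_size_cat // cat_cons IH.
Qed.

Lemma size_phase1 p : size (phase1 s B p) = p + \sum_(0 <= i < p.+1) size (D i).
Proof.
elim: p => [|p IH] /=; first by rewrite cats0 big_nat1.
by rewrite size_cat /= IH [in RHS]big_nat_recr /=; lia.
Qed.

Lemma last_detour p q : last p (detour p q) = p.
Proof.
by rewrite /detour last_cat; case: (q - p) => [|k] //=; rewrite rev_cons last_rcons.
Qed.

Lemma last_detours_at p : last p (D p) = p.
Proof.
by rewrite /detours_at; elim: [seq _ <- _ | _] => //= b bs; rewrite last_cat last_detour.
Qed.

Lemma last_phase1 p : last p (phase1 s B p) = 0.
Proof. by elim: p => [|p IH] /=; rewrite ?cats0 ?last_cat last_detours_at. Qed.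

Lemma size_detours_at p :
  size (D p) = \sum_(b <- undup B | bledge s b == p) ((br s b - p) + (br s b - p)).
Proof.
rewrite /detours_at size_flatten /shape -map_comp sumnE big_map big_filter.
by apply: eq_bigr => b _ /=; rewrite /detour size_cat size_rev !size_iota.
Qed.

End PhaseOne.

Lemma reads_phase2 s B g : g < size s ->
  reads s (schedule s B) g (ledge s g + size (phase1 s B (mtot s))).
Proof.
move=> gn; apply: reads_window; rewrite /schedule -drop_drop drop_cons_cat_last last_phase1.
rewrite -[0 :: _]/(iota 0 (mtot s).+1) drop_iota take_iota add0n.
by congr iota; apply/minn_idPl; have := mtot_split gn; lia.
Qed.

Section RespBound.
Variables (s : seq nat) (P : pred nat).
Local Notation n := (size s).

Definition batched_right g := \sum_(0 <= h < n | P h && (g < h)) sz s h.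
Definition batched_total := \sum_(0 <= h < n | P h) sz s h.

Definition resp_bound g :=
  if P g then mtot s - ledge s g + 2 * batched_right g
  else mtot s + 2 * batched_total + ledge s g.

Lemma batched_total_split g : g < n ->
  batched_total = batched_left s P g + (if P g then sz s g else 0) + batched_right g.
Proof.
move=> gn; rewrite -(sum_nat_pick (fun h => if P h then sz s h else 0) gn).
rewrite /batched_total /batched_left /batched_right big_mkcond.
rewrite [X in _ = X + _ + _]big_mkcond [X in _ = _ + X]big_mkcond -!big_split /=.
apply: eq_bigr => h _; case: (P h); case: (ltngtP h g) => [hg|gh|->];
  by rewrite ?eqxx ?(ltn_eqF hg) ?(gtn_eqF gh) /= ?addn0.
Qed.

Lemma sum_sz_right_split g :
  \sum_(0 <= h < n | g < h) sz s h = batched_right g + unbatched_right s P g.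
Proof.
rewrite /batched_right /unbatched_right big_mkcond [X in _ = X + _]big_mkcond.
rewrite [X in _ = _ + X]big_mkcond -big_split /=; apply: eq_bigr => h _.
by case: (P h); case: (g < h); rewrite /= ?addn0.
Qed.

Lemma resp_bound_identity g : g < n ->
  resp_bound g + 2 * (sz s g + unbatched_right s P g) =
  3 * (mtot s - ledge s g) + 2 * (if P g then 0 else ledge s g + batched_left s P g).
Proof.
move=> gn; have := mtot_split gn; rewrite sum_sz_right_split.
have := batched_total_split gn; rewrite /resp_bound.
by case: (P g); lia.
Qed.

End RespBound.

Section ScheduleResponse.
Variables (s : seq nat) (P : pred nat).
Hypothesis s_gt0 : all (fun x => 0 < x) s.
Local Notation n := (size s).
Local Notation B := (singletons s P).
Local Notation D p := (detours_at s B p).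

Lemma size_detours_at_singletons p :
  size (D p) = \sum_(0 <= h < n | P h && (ledge s h == p)) 2 * sz s h.
Proof.
rewrite size_detours_at (undup_id (singletons_uniq s P)) big_map big_filter_cond.
rewrite /index_iota subn0; apply: eq_bigr => h /andP[_ /eqP <-].
by rewrite /br /rpos /lpos /bledge /ledge /=; lia.
Qed.

Lemma sum_by_ledge a c (F : nat -> nat) :
  \sum_(a <= i < c) \sum_(0 <= h < n | P h && (ledge s h == i)) F h =
  \sum_(0 <= h < n | P h && (a <= ledge s h < c)) F h.
Proof.
under eq_bigr => i _ do rewrite big_mkcond.
rewrite exchange_big_nat /= [RHS]big_mkcond; apply: eq_bigr => h _.
case: (P h) => /=; last by rewrite big1.
rewrite -(sum_nat_pred1 a c (ledge s h) (fun=> F h)).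
by apply: eq_bigr => i _; rewrite eq_sym.
Qed.

Lemma size_phase1_singletons :
  size (phase1 s B (mtot s)) <= mtot s + 2 * batched_total s P.
Proof.
rewrite size_phase1 leq_add2l; under eq_bigr => i _ do rewrite size_detours_at_singletons.
rewrite sum_by_ledge /batched_total big_distrr /=.
by apply: leq_sum_nat_subpred => h _ /andP[].
Qed.

Lemma phase1_time_batched g : g < n ->
  phase1_time s B (mtot s) (ledge s g) <= mtot s - ledge s g + 2 * batched_right s P g.
Proof.
move=> gn; rewrite /phase1_time leq_add2l.
under eq_bigr => i _ do rewrite size_detours_at_singletons.
rewrite sum_by_ledge /batched_right big_distrr /=.
apply: leq_sum_nat_subpred => h hn /andP[-> /andP[gh _]].
by rewrite -(ltn_ledge s_gt0 gn hn).
Qed.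

Lemma detours_at_batched g : g < n -> P g ->
  D (ledge s g) = detour (ledge s g) (ledge s g + sz s g).
Proof.
move=> gn Pg; rewrite /detours_at (undup_id (singletons_uniq s P)) /singletons.
rewrite filter_map -filter_predI (@eq_in_filter _ _ (pred1 g)); last first.
  move=> h; rewrite mem_iota add0n => /andP[_ hn] /=.
  apply/andP/eqP => [[/eqP e Ph]|->]; last by rewrite Pg eqxx.
  exact: (ledge_inj s_gt0 hn gn e).
rewrite filter_pred1_uniq ?iota_uniq ?mem_iota //= cats0.
by congr detour; rewrite /br /rpos /lpos /ledge /=; lia.
Qed.

Lemma reads_batched g : g < n -> P g ->
  reads s (schedule s B) g (phase1_time s B (mtot s) (ledge s g)).
Proof.
move=> gn Pg; have := mtot_split gn => m_split.
apply: reads_window; rewrite /schedule drop_phase1; last by lia.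
rewrite phase1E detours_at_batched // /detour addKn -!catA -cat_cons.
by rewrite take_size_cat //= size_iota.
Qed.

Lemma resp_singletons_leq g : g < n -> resp s (schedule s B) g <= resp_bound s P g.
Proof.
move=> gn; rewrite /resp_bound; case: ifP => Pg.
  exact: leq_trans (resp_leq (reads_batched gn Pg)) (phase1_time_batched gn).
apply: leq_trans (resp_leq (reads_phase2 B gn)) _.
by have := size_phase1_singletons; lia.
Qed.

End ScheduleResponse.

Lemma total_resp_lb s req tr : all (fun f => f < size s) req -> feasible s req tr ->
  \sum_(0 <= g < size s) nreq req g * (mtot s - ledge s g) <= total_resp s req tr.
Proof.
move=> req_lt feas; rewrite /total_resp sumnE big_map -(sum_seq_count_mem _ req_lt).
by rewrite big_seq [leqRHS]big_seq; apply: leq_sum => f; apply: resp_lb.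
Qed.

Lemma v_singletons_leq s req P :
  all (fun x => 0 < x) s -> all (fun f => f < size s) req ->
  v s req (singletons s P) <= \sum_(0 <= g < size s) nreq req g * resp_bound s P g.
Proof.
move=> s_gt0 req_lt; rewrite /v /total_resp sumnE big_map -(sum_seq_count_mem _ req_lt).
rewrite big_seq [leqRHS]big_seq; apply: leq_sum => f /(allP req_lt).
exact: resp_singletons_leq.
Qed.

Lemma sum_resp_bound_identity s req P :
  \sum_(0 <= g < size s) nreq req g * resp_bound s P g + 2 * batch_budget s req P =
  3 * \sum_(0 <= g < size s) nreq req g * (mtot s - ledge s g) + 2 * unbatched_cost s req P.
Proof.
rewrite /batch_budget /unbatched_cost !big_distrr -!big_split /=.
by apply: eq_big_nat => g /andP[_ gn]; have := resp_bound_identity P gn; nia.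
Qed.

Theorem proposition7 (s req : seq nat) :
  all (fun x => 0 < x) s ->
  all (fun f => f < size s) req ->
  forall tr : seq nat, feasible s req tr ->
  v s req (FGS s req) <= 3 * total_resp s req tr.
Proof.
move=> s_gt0 req_lt tr feas.
have [P -> cost_le_budget] := FGS_invariant req s_gt0.
have := v_singletons_leq P s_gt0 req_lt.
have := total_resp_lb req_lt feas.
have := sum_resp_bound_identity s req P.
lia.
Qed.
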